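(* Let $X=(x_1,\ldots,x_N)$ with $x_n\in\mathbb{R}^D$, let $K\in\mathbb{N}$, and let $p_{nk}\in[0,1]$ ($n=1,\ldots,N$, $k=1,\ldots,K$) with $\sum_{k=1}^K p_{nk}=1$ for every $n$. Let $z_1,\ldots,z_N$ be independent random vectors, where $z_n=(z_{n1},\ldots,z_{nK})\in\{0,1\}^K$ has exactly one entry equal to $1$ and $\Pr(z_{nk}=1)=p_{nk}$. Define $r_k=\sum_{n=1}^N p_{nk}$, $w_k^{EM}=\frac{r_k}{N}$ and $w_k^{SEM}=\frac{1}{N}\sum_{n=1}^N z_{nk}$. Fix $k\in\{1,\ldots,K\}$ with $r_k>0$ and let $2e^{-r_k/3}\leq\delta\leq 1$. Then for $\lambda_w=\sqrt{\frac{3\ln(2/\delta)}{r_k}}$, with probability at least $1-\delta$, \[\left|w_k^{SEM}-w_k^{EM}\right|\leq\lambda_w\, w_k^{EM}.\]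
   Context: This describes one update step of the EM and the stochastic EM (SEM) algorithm for a Gaussian mixture: $p_{nk}=p(z_{nk}=1\mid X,\theta)$ is the posterior probability (responsibility) that component $k$ generated $x_n$ under the current parameters $\theta$; EM sets the new weight to $w_k^{EM}$, while SEM samples the assignment $z$ from these posteriors independently for each $n$ and sets the new weight to $w_k^{SEM}$. *)

From HB Require Import structures.
From mathcomp Require Import all_boot all_order all_algebra.
From mathcomp Require Import reals sequences exp.
Set Implicit Arguments. Unset Strict Implicit. Unset Printing Implicit Defensive.
Import Order.TTheory GRing.Theory Num.Theory.
Local Open Scope ring_scope.

(* An assignment z = (z_1,...,z_N), where z_n in {0,1}^K has exactly one entry
   equal to 1, is encoded as a function z : 'I_N -> 'I_K (z n = the index of
   the 1 entry); so z_{nk} = (z n == k). The z_n are independent with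
   Pr(z_{nk}=1) = p n k, i.e. the joint law is the product distribution. *)

Section SEM.
Variables (R : realType) (N K : nat) (p : 'I_N -> 'I_K -> R).

Definition assign_prob (z : {ffun 'I_N -> 'I_K}) : R := \prod_(n < N) p n (z n).

Definition Prob (E : pred {ffun 'I_N -> 'I_K}) : R :=
  \sum_(z : {ffun 'I_N -> 'I_K} | E z) assign_prob z.

Definition zind (z : {ffun 'I_N -> 'I_K}) (n : 'I_N) (k : 'I_K) : R :=
  (z n == k)%:R.

Definition resp (k : 'I_K) : R := \sum_(n < N) p n k.
Definition wEM (k : 'I_K) : R := resp k / N%:R.
Definition wSEM (z : {ffun 'I_N -> 'I_K}) (k : 'I_K) : R :=
  (\sum_(n < N) zind z n k) / N%:R.
Definition lambda_w (k : 'I_K) (delta : R) : R :=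
  Num.sqrt (3 * ln (2 / delta) / resp k).
End SEM.

From HB Require Import structures.
From mathcomp Require Import all_boot all_order all_algebra.
From mathcomp Require Import functions reals sequences exp.
From mathcomp Require Import topology normedtype derive realfun.
From mathcomp Require Import ring lra.
Import Order.TTheory GRing.Theory Num.Theory.
Import numFieldNormedType.Exports.
Local Open Scope ring_scope.

(* Chernoff bound.  N w_k^SEM = S_k := \sum_n z_{nk} is a sum of independent
   Bernoulli(p_{nk}) variables with mean r_k, so E[e^{u S_k}] <= e^{r_k (e^u - 1)}.
   Markov's inequality applied to e^{(2 L/3)(S_k - (1 + L) r_k)} and to
   e^{(2 L/3)((1 - L) r_k - S_k)}, with the quadratic bounds on e^{+-t} below,
   bounds each tail of |S_k - r_k| > L r_k by e^{-r_k L^2 / 3}; the choice of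
   lambda_w makes these two tails sum to delta. *)

Lemma expR_le_quad (R : realType) (t : R) : 0 <= t <= 2/3 ->
  expR t <= 1 + t + 3/4 * t ^+ 2.
Proof.
move=> /andP[t_ge0 t_le].
(* F x = (1 + x + 3/4 x^2) e^{-x} is nondecreasing on [0, 2/3] and F 0 = 1 *)
pose F : R -> R := ((cst 1 + id) + (3/4 : R) \*: (id * id)) * (expR \o -%R).
pose dF (x : R) := expR (- x) * (x / 2 - 3/4 * x ^+ 2).
have F_derive (x : R) : is_derive x 1 F (dF x).
  have dP := is_deriveD (is_deriveD (is_derive_cst (1 : R) x 1) (is_derive_id x 1))
    (is_deriveZ (3/4 : R) (is_deriveM (is_derive_id x 1) (is_derive_id x 1))).
  have dE := is_derive1_comp (is_derive_expR (- x)) (is_deriveNid x 1).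
  apply: is_derive_eq (is_deriveM dP dE) _.
  change ((1 + x + 3/4 * (x * x)) * (expR (- x) * -1)
    + expR (- x) * (0 + 1 + 3/4 * (x * 1 + x * 1)) = dF x).
  by rewrite /dF; field.
have F0 : F 0 = 1.
  change ((1 + 0 + 3/4 * (0 * 0)) * expR (- 0) = 1 :> R).
  by rewrite oppr0 expR0; field.
have Ft : F t = (1 + t + 3/4 * t ^+ 2) * expR (- t).
  by change ((1 + t + 3/4 * (t * t)) * expR (- t) = (1 + t + 3/4 * t ^+ 2) * expR (- t));
    rewrite expr2.
have F_ge1 : 1 <= F t.
  have [->|t_neq0] := eqVneq t 0; first by rewrite F0.
  have t_gt0 : 0 < t by rewrite lt_def t_neq0.
  have [|c] := MVT t_gt0 (fun x _ => F_derive x).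
    apply/continuous_subspaceT => x.
    by case: (F_derive x) => dx _; exact/differentiable_continuous/derivable1_diffP.
  rewrite in_itv /= => /andP[c_gt0 c_lt] FtE.
  have : 0 <= dF c * (t - 0).
    apply: mulr_ge0; last lra.
    by apply: mulr_ge0; [exact: expR_ge0 | nra].
  by rewrite -FtE F0; lra.
have eE : expR t * expR (- t) = 1 by rewrite expRxMexpNx_1.
have e_gt0 := expR_gt0 t.
rewrite Ft in F_ge1; nra.
Qed.

Lemma expRN_le_quad (R : realType) (s : R) : 0 <= s ->
  expR (- s) <= 1 - s + 3/4 * s ^+ 2.
Proof.
move=> s_ge0.
(* e^{-s} = 1 / (e^{s/2})^2 <= 1 / (1 + s/2)^2, and the latter is below the quadratic *)
have a_ge : 1 + s / 2 <= expR (s / 2) by exact: expR_ge1Dx.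
have abb : expR (- s) * (expR (s / 2) * expR (s / 2)) = 1.
  by rewrite -!expRD (_ : - s + (s / 2 + s / 2) = 0) ?expR0 //; field.
set a := expR (s / 2) in a_ge abb; set b := expR (- s) in abb *.
have b_gt0 : 0 < b by exact: expR_gt0.
have quad_ge0 : 0 <= 1 - s + 3/4 * s ^+ 2.
  rewrite (_ : 1 - s + 3/4 * s ^+ 2 = (1 - s / 2) ^+ 2 + s ^+ 2 / 2); last by field.
  by apply: addr_ge0; [exact: sqr_ge0 | apply: mulr_ge0; [exact: sqr_ge0 | lra]].
have quad_inv : 1 <= (1 + s / 2) * (1 + s / 2) * (1 - s + 3/4 * s ^+ 2).
  rewrite -subr_ge0 (_ : _ - 1 = s ^+ 3 / 2 + 3 / 16 * s ^+ 4); last by field.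
  by apply: addr_ge0; apply: mulr_ge0; rewrite ?exprn_ge0 //; lra.
have aa_ge : (1 + s / 2) * (1 + s / 2) <= a * a by apply: ler_pM => //; lra.
have : a * a * b <= a * a * (1 - s + 3/4 * s ^+ 2).
  by rewrite mulrC abb; apply: le_trans quad_inv _; exact: ler_wpM2r.
by rewrite ler_pM2l //; apply: mulr_gt0; lra.
Qed.

Section SEMStep.
Context {R : realType} {N K : nat} {p : 'I_N -> 'I_K -> R}.
Hypothesis p01 : forall n k, 0 <= p n k <= 1.
Hypothesis p_sum1 : forall n, \sum_(k < K) p n k = 1.

Local Notation assignment := {ffun 'I_N -> 'I_K}.

Definition expect (f : assignment -> R) : R := \sum_z assign_prob p z * f z.

Definition zcount (k : 'I_K) (z : assignment) : R := \sum_(n < N) zind R z n k.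

Lemma assign_prob_ge0 z : 0 <= assign_prob p z.
Proof. by apply: prodr_ge0 => n _; case/andP: (p01 n (z n)). Qed.

Lemma expect_expR_zcount k u :
  expect (fun z => expR (u * zcount k z)) = \prod_(n < N) (1 + p n k * (expR u - 1)).
Proof.
rewrite /expect /zcount.
under eq_bigr => z _ do rewrite mulr_sumr expR_sum /assign_prob -big_split /=.
rewrite -(bigA_distr_bigA (fun n j => p n j * expR (u * (j == k)%:R))) /=.
apply: eq_bigr => n _.
rewrite (bigD1 k) //= eqxx mulr1.
have := p_sum1 n; rewrite (bigD1 k) //= => p_sum.
rewrite (eq_bigr (p n)) => [|j /negbTE ->]; last by rewrite mulr0 expR0 mulr1.
rewrite (_ : \sum_(j < K | j != k) p n j = 1 - p n k); first ring.
by rewrite -p_sum addrAC subrr add0r.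
Qed.

Lemma sum_assign_prob : \sum_z assign_prob p z = 1.
Proof.
rewrite /assign_prob -(bigA_distr_bigA p) /=.
by rewrite big1 // => n _; exact: p_sum1.
Qed.

Lemma expect_expR_zcount_le k u :
  expect (fun z => expR (u * zcount k z)) <= expR (resp p k * (expR u - 1)).
Proof.
rewrite expect_expR_zcount /resp mulr_suml expR_sum.
apply: ler_prod => n _; apply/andP; split; last exact: expR_ge1Dx.
by have := p01 n k; have := expR_gt0 u; nra.
Qed.

Lemma expect_expR_zcountD_le k u c :
  expect (fun z => expR (u * zcount k z + c)) <= expR (c + resp p k * (expR u - 1)).
Proof.
rewrite /expect; under eq_bigr => z _ do rewrite expRD mulrA.
rewrite -big_distrl /= expRD mulrC ler_wpM2l ?expR_ge0 //.
exact: expect_expR_zcount_le.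
Qed.

Lemma expect_indicator (E : pred assignment) : expect (fun z => (E z)%:R) = Prob p E.
Proof.
rewrite /expect /Prob [RHS]big_mkcond; apply: eq_bigr => z _.
by case: (E z); rewrite ?mulr1 ?mulr0.
Qed.

Lemma Prob_predC (E : pred assignment) : Prob p (predC E) = 1 - Prob p E.
Proof. by rewrite /Prob -sum_assign_prob [in RHS](bigID E) /= addrAC subrr add0r. Qed.

Lemma eq_Prob (E1 E2 : pred assignment) : E1 =1 E2 -> Prob p E1 = Prob p E2.
Proof. exact: eq_bigl. Qed.

Lemma Prob_le_expect (E : pred assignment) (g : assignment -> R) :
  (forall z, 0 <= g z) -> (forall z, E z -> 1 <= g z) -> Prob p E <= expect g.
Proof.
move=> g_ge0 g_ge1.
rewrite /Prob /expect [leRHS](bigID E) /= -[leLHS]addr0 lerD //.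
  by apply: ler_sum => z Ez; rewrite -[leLHS]mulr1 ler_wpM2l ?assign_prob_ge0 ?g_ge1.
by apply: sumr_ge0 => z _; rewrite mulr_ge0 ?assign_prob_ge0.
Qed.

Lemma Prob_sub_predU {E A B : pred assignment} :
  {subset E <= predU A B} -> Prob p E <= Prob p A + Prob p B.
Proof.
move=> sEAB.
rewrite -[Prob p A]expect_indicator -[Prob p B]expect_indicator /expect -big_split /=.
apply: le_trans (Prob_le_expect _ (fun z => (A z)%:R + (B z)%:R) _ _) _ => [z|z|].
- by rewrite addr_ge0.
- by move/sEAB; rewrite !inE; case: (A z); case: (B z); rewrite /= ?addr0 ?add0r ?lerDl.
- by apply: ler_sum => z _; rewrite mulrDr.
Qed.

Lemma resp_ge0 k : 0 <= resp p k.
Proof. by apply: sumr_ge0 => n _; case/andP: (p01 n k). Qed.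

Lemma Prob_upper_tail k L : 0 <= L <= 1 ->
  Prob p [pred z | L * resp p k < zcount k z - resp p k]
  <= expR (- (resp p k * L ^+ 2 / 3)).
Proof.
move=> /andP[L_ge0 L_le1]; have := resp_ge0 k; set r := resp p k => r_ge0.
pose t := 2/3 * L.
pose g z := expR (t * zcount k z + - (t * (1 + L) * r)).
apply: le_trans (Prob_le_expect _ g _ _) _ => [z|z|]; first exact: expR_ge0.
  rewrite inE => tail; apply: le_trans (expR_ge1Dx _); rewrite lerDl.
  rewrite (_ : _ + _ = t * (zcount k z - r - L * r)); last by ring.
  by apply: mulr_ge0; rewrite /t; lra.
apply: le_trans (expect_expR_zcountD_le _ _ _) _; rewrite ler_expR.
have : expR t - 1 <= t + 3/4 * t ^+ 2 by have := @expR_le_quad _ t; rewrite /t; lra.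
rewrite /t -/r; nra.
Qed.

Lemma Prob_lower_tail k L : 0 <= L ->
  Prob p [pred z | L * resp p k < resp p k - zcount k z]
  <= expR (- (resp p k * L ^+ 2 / 3)).
Proof.
move=> L_ge0; have := resp_ge0 k; set r := resp p k => r_ge0.
pose t := 2/3 * L.
pose g z := expR (- t * zcount k z + t * (1 - L) * r).
apply: le_trans (Prob_le_expect _ g _ _) _ => [z|z|]; first exact: expR_ge0.
  rewrite inE => tail; apply: le_trans (expR_ge1Dx _); rewrite lerDl.
  rewrite (_ : _ + _ = t * (r - zcount k z - L * r)); last by ring.
  by apply: mulr_ge0; rewrite /t; lra.
apply: le_trans (expect_expR_zcountD_le _ _ _) _; rewrite ler_expR.
have : expR (- t) - 1 <= - t + 3/4 * t ^+ 2.
  by have := @expRN_le_quad _ t; rewrite /t; lra.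
rewrite /t -/r; nra.
Qed.

Lemma Prob_zcount_dev k L : 0 <= L <= 1 ->
  1 - 2 * expR (- (resp p k * L ^+ 2 / 3))
  <= Prob p [pred z | `|zcount k z - resp p k| <= L * resp p k].
Proof.
move=> L01; have L_ge0 : 0 <= L by case/andP: L01.
have := Prob_upper_tail k L L01; have := Prob_lower_tail k L L_ge0.
set r := resp p k => lower upper.
have cover : {subset predC [pred z | `|zcount k z - r| <= L * r]
    <= predU [pred z | L * r < zcount k z - r] [pred z | L * r < r - zcount k z]}.
  by move=> z; rewrite !inE -ltNge ltr_normr opprB.
by have := Prob_sub_predU cover; rewrite Prob_predC; lra.
Qed.

Lemma resp_gt0_size {k} : 0 < resp p k -> (0 < N)%N.
Proof.
case: (posnP N) => [N0|//]; rewrite /resp big1 ?ltxx // => n _.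
by have := ltn_ord n; move: (nat_of_ord n) => m; rewrite N0.
Qed.

Lemma wSEM_dev_le (z : assignment) k L : (0 < N)%N ->
  (`|@wSEM R N K z k - wEM p k| <= L * wEM p k) = (`|zcount k z - resp p k| <= L * resp p k).
Proof.
move=> N_gt0; have Ninv_gt0 : 0 < N%:R^-1 :> R by rewrite invr_gt0 ltr0n.
by rewrite /wSEM /wEM -mulrBl normrM (gtr0_norm Ninv_gt0) mulrA ler_pM2r.
Qed.

Section LambdaW.
Context {k : 'I_K} {delta : R}.
Hypothesis resp_gt0 : 0 < resp p k.

Lemma lambda_w_sqr : 0 < delta <= 2 ->
  lambda_w p k delta ^+ 2 = 3 * ln (2 / delta) / resp p k.
Proof.
case/andP=> delta_gt0 delta_le2; rewrite sqr_sqrtr // divr_ge0 ?(ltW resp_gt0) //.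
by rewrite mulr_ge0 // ln_ge0 // ler_pdivlMr // mul1r.
Qed.

Lemma expR_lambda_w : 0 < delta <= 2 ->
  2 * expR (- (resp p k * lambda_w p k delta ^+ 2 / 3)) = delta.
Proof.
move=> delta02; have /andP[delta_gt0 _] := delta02.
rewrite lambda_w_sqr // (_ : resp p k * _ / 3 = ln (2 / delta)); last first.
  by field; rewrite gt_eqF.
by rewrite expRN lnK ?posrE ?divr_gt0 // invf_div mulrC divfK ?pnatr_eq0.
Qed.

Lemma lambda_w_le1 : 2 * expR (- (resp p k / 3)) <= delta <= 1 -> lambda_w p k delta <= 1.
Proof.
case/andP; have := resp_gt0; set r := resp p k => r_gt0 delta_ge delta_le1.
have delta_gt0 : 0 < delta by have := expR_gt0 (- (r / 3)); lra.
have ln_le : ln (2 / delta) <= r / 3.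
  rewrite -[leRHS]expRK ler_ln ?posrE ?divr_gt0 ?expR_gt0 // ler_pdivrMr //.
  have := expRxMexpNx_1 (r / 3); have := expR_gt0 (r / 3); nra.
have : lambda_w p k delta ^+ 2 <= 1.
  rewrite lambda_w_sqr ?delta_gt0 /=; last lra.
  by rewrite -/r ler_pdivrMr // mul1r; lra.
by have : 0 <= lambda_w p k delta := sqrtr_ge0 _; nra.
Qed.

End LambdaW.

End SEMStep.

Theorem theorem1 (R : realType) (D N K : nat) (X : 'I_N -> 'rV[R]_D)
  (p : 'I_N -> 'I_K -> R)
  (hp01 : forall n k, 0 <= p n k <= 1)
  (hpsum : forall n, \sum_(k < K) p n k = 1)
  (k : 'I_K) (delta : R)
  (hr : 0 < resp p k)
  (hdelta : 2 * expR (- (resp p k / 3)) <= delta <= 1) :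
  1 - delta <=
    Prob p [pred z : {ffun 'I_N -> 'I_K} | `|@wSEM R N K z k - wEM p k| <= lambda_w p k delta * wEM p k].
Proof.
have N_gt0 := resp_gt0_size hr.
have delta_02 : 0 < delta <= 2.
  by case/andP: hdelta => lo hi; have := expR_gt0 (- (resp p k / 3)); lra.
have L01 : 0 <= lambda_w p k delta <= 1 by rewrite sqrtr_ge0 (lambda_w_le1 hr hdelta).
rewrite (eq_Prob _
    [pred z | `|zcount k z - resp p k| <= lambda_w p k delta * resp p k]); last first.
  by move=> z; rewrite !inE wSEM_dev_le.
rewrite -{1}(expR_lambda_w hr delta_02).
exact: Prob_zcount_dev hp01 hpsum k _ L01.
Qed.
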